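(* Let $\mathcal{V}$ be a non-trivial quantale and $\mathsf{F}\colon\mathbf{Set}\to\mathbf{Set}$ a functor. Let $\Lambda$ be a class of natural transformations $\lambda\colon\mathbf{Cat}(\mathcal{V})(-,A_\lambda)\to\mathbf{Set}(\mathsf{F}|-|,|B_\lambda|)$, where $A_\lambda,B_\lambda$ are $\mathcal{V}$-categories and each $A_\lambda$ is injective in $\mathbf{Cat}(\mathcal{V})$ with respect to initial morphisms. Then the topological lifting of $\mathsf{F}$ with respect to $\Lambda$ is Kantorovich.
   Context: A quantale $(\mathcal{V},\otimes,k)$ is a complete lattice with commutative monoid structure, each $u\otimes-$ preserving joins, $\hom(u,-)$ its right adjoint; non-trivial: $\bot\ne\top$. $\mathcal{V}$-categories $(X,a)$: $k\le a(x,x)$, $a(x,y)\otimes a(y,z)\le a(x,z)$; $\mathcal{V}$-functors: $a(x,y)\le b(fx,fy)$; initial if equality; category $\mathbf{Cat}(\mathcal{V})$ with forgetful functor $|-|$. $A$ is injective w.r.t. initial morphisms if for every initial $\mathcal{V}$-functor $i\colon X\to Y$ and $\mathcal{V}$-functor $f\colon X\to A$ there is a $\mathcal{V}$-functor $g\colon Y\to A$ with $g\cdot i=f$. The topological lifting of $\mathsf{F}$ w.r.t. $\Lambda$ sends a $\mathcal{V}$-category $X$ to $\mathsf{F}|X|$ equipped with the initial structure $c(\mathfrak{x},\mathfrak{y})=\bigwedge b_\lambda(\lambda_X(f)(\mathfrak{x}),\lambda_X(f)(\mathfrak{y}))$ (meet over $\lambda\in\Lambda$ and $\mathcal{V}$-functors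 $f\colon X\to A_\lambda$, with $b_\lambda$ the structure of $B_\lambda$), acting as $\mathsf{F}$ on maps. $\mathcal{V}$ denotes $(\mathcal{V},\hom)$, $\mathcal{V}^\kappa$ has $[f,g]=\bigwedge_i\hom(f(i),g(i))$. A $\kappa$-ary $\mathcal{V}$-valued predicate lifting for $\mathsf{F}$ is a natural transformation $\mathbf{Set}(-,\mathcal{V}^\kappa)\to\mathbf{Set}(\mathsf{F}-,\mathcal{V})$; the Kantorovich lifting $\mathsf{F}^{\Lambda'}$ of a class $\Lambda'$ of these sends $(X,a)$ to $\mathsf{F}X$ with structure $\bigwedge\hom(\lambda_X(f)(\mathfrak{x}),\lambda_X(f)(\mathfrak{y}))$ over $\kappa$-ary $\lambda\in\Lambda'$ and $\mathcal{V}$-functors $f\colon(X,a)\to\mathcal{V}^\kappa$; a lifting is Kantorovich if it equals $\mathsf{F}^{\Lambda'}$ for some class $\Lambda'$. *)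

Set Implicit Arguments.
Unset Strict Implicit.

Record Quantale : Type := Build_Quantale {
  qcar :> Type;
  qle : qcar -> qcar -> Prop;
  qsup : (qcar -> Prop) -> qcar;
  qtens : qcar -> qcar -> qcar;
  qk : qcar;
  qhom : qcar -> qcar -> qcar;
  qle_refl : forall u, qle u u;
  qle_trans : forall u v w, qle u v -> qle v w -> qle u w;
  qle_antisym : forall u v, qle u v -> qle v u -> u = v;
  qsup_ub : forall (S : qcar -> Prop) u, S u -> qle u (qsup S);
  qsup_least : forall (S : qcar -> Prop) w, (forall u, S u -> qle u w) -> qle (qsup S) w;
  qtensA : forall u v w, qtens u (qtens v w) = qtens (qtens u v) w;
  qtensC : forall u v, qtens u v = qtens v u;
  qtens1 : forall u, qtens qk u = u;
  qtens_sup : forall u (S : qcar -> Prop),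
      qtens u (qsup S) = qsup (fun w => exists v, S v /\ w = qtens u v);
  qhom_adj : forall u v w, qle (qtens u v) w <-> qle v (qhom u w)
}.
Arguments qle {q} _ _.
Arguments qsup {q} _.
Arguments qtens {q} _ _.
Arguments qk {q}.
Arguments qhom {q} _ _.

Definition qbot (V : Quantale) : V := qsup (fun _ => False).
Definition qtop (V : Quantale) : V := qsup (fun _ => True).
Definition qinf (V : Quantale) (S : V -> Prop) : V :=
  qsup (fun x => forall s, S s -> qle x s).
Definition qinf_fam (V : Quantale) (I : Type) (f : I -> V) : V :=
  qinf (fun v => exists i, v = f i).
Definition nontrivial (V : Quantale) : Prop := qbot V <> qtop V.

Record VCat (V : Quantale) : Type := Build_VCat {
  vob :> Type;
  vhom : vob -> vob -> V;
  vcat_refl : forall x, qle qk (vhom x x);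
  vcat_trans : forall x y z, qle (qtens (vhom x y) (vhom y z)) (vhom x z)
}.
Arguments vhom {V} _ _ _.

Definition is_vfunctor (V : Quantale) (X Y : VCat V) (f : X -> Y) : Prop :=
  forall x y, qle (vhom X x y) (vhom Y (f x) (f y)).

Record VFun (V : Quantale) (X Y : VCat V) : Type := Build_VFun {
  vfun :> X -> Y;
  vfunP : is_vfunctor vfun
}.

Lemma vfcomp_proof (V : Quantale) (X Y Z : VCat V) (g : VFun Y Z) (f : VFun X Y) :
  is_vfunctor (fun x => g (f x)).
Proof.
  intros x y. eapply qle_trans. apply (vfunP f). apply (vfunP g).
Qed.

Definition vfcomp (V : Quantale) (X Y Z : VCat V) (g : VFun Y Z) (f : VFun X Y)
  : VFun X Z := Build_VFun (vfcomp_proof g f).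

Definition is_initial (V : Quantale) (X Y : VCat V) (f : X -> Y) : Prop :=
  forall x y, vhom Y (f x) (f y) = vhom X x y.

Definition inj_initial (V : Quantale) (A : VCat V) : Prop :=
  forall (X Y : VCat V) (i : VFun X Y), is_initial i ->
  forall f : VFun X A, exists g : VFun Y A, forall x, g (i x) = f x.

Record SetFunctor : Type := Build_SetFunctor {
  Fob :> Type -> Type;
  Fmap : forall (X Y : Type), (X -> Y) -> Fob X -> Fob Y;
  Fmap_id : forall (X : Type) (t : Fob X), Fmap (fun x : X => x) t = t;
  Fmap_comp : forall (X Y Z : Type) (f : X -> Y) (g : Y -> Z) (t : Fob X),
      Fmap (fun x => g (f x)) t = Fmap g (Fmap f t)
}.
Arguments Fmap {s X Y} _ _.

(** * A class Λ of natural transformations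
      λ : Cat(V)(-, A_λ) -> Set(F|-|, |B_λ|), indexed by a type. *)
Record LiftingClass (V : Quantale) (F : SetFunctor) : Type := Build_LiftingClass {
  lc_idx : Type;
  lc_A : lc_idx -> VCat V;
  lc_B : lc_idx -> VCat V;
  lc_nat : forall (l : lc_idx) (X : VCat V), VFun X (lc_A l) -> F X -> lc_B l;
  lc_natural : forall (l : lc_idx) (X Y : VCat V) (h : VFun X Y)
      (f : VFun Y (lc_A l)) (t : F X),
      @lc_nat l X (vfcomp f h) t = @lc_nat l Y f (Fmap h t)
}.
Arguments lc_nat {V F} _ _ {X} _ _ : rename.
Arguments lc_A {V F} _ _ : rename.
Arguments lc_B {V F} _ _ : rename.

(** Structure of the topological lifting of F w.r.t. Λ on F|X|
    (it acts as F on maps). *)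
Definition top_hom (V : Quantale) (F : SetFunctor) (L : LiftingClass V F)
  (X : VCat V) (s t : F X) : V :=
  qinf_fam (fun p : {l : lc_idx L & VFun X (lc_A L l)} =>
    vhom (lc_B L (projT1 p)) (lc_nat L (projT1 p) (projT2 p) s)
                             (lc_nat L (projT1 p) (projT2 p) t)).

Record PredLiftingClass (V : Quantale) (F : SetFunctor) : Type := Build_PLC {
  pl_idx : Type;
  pl_ar : pl_idx -> Type;
  pl_lift : forall (j : pl_idx) (X : Type), (X -> (pl_ar j -> V)) -> F X -> V;
  pl_natural : forall (j : pl_idx) (X Y : Type) (h : X -> Y)
      (g : Y -> (pl_ar j -> V)) (t : F X),
      @pl_lift j X (fun x => g (h x)) t = @pl_lift j Y g (Fmap h t)
}.
Arguments pl_lift {V F} _ _ {X} _ _ : rename.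
Arguments pl_ar {V F} _ _ : rename.

Definition Vpow_hom (V : Quantale) (K : Type) (f g : K -> V) : V :=
  qinf_fam (fun i : K => qhom (f i) (g i)).

Definition is_vfunctor_pow (V : Quantale) (X : VCat V) (K : Type)
  (f : X -> (K -> V)) : Prop :=
  forall x y, qle (vhom X x y) (Vpow_hom (f x) (f y)).

Definition kant_hom (V : Quantale) (F : SetFunctor) (P : PredLiftingClass V F)
  (X : VCat V) (s t : F X) : V :=
  qinf_fam (fun p : {j : pl_idx P & {f : X -> (pl_ar P j -> V) | is_vfunctor_pow f}} =>
    qhom (pl_lift P (projT1 p) (proj1_sig (projT2 p)) s)
         (pl_lift P (projT1 p) (proj1_sig (projT2 p)) t)).

(** A lifting of F (given by its structures on F|X|, acting as F on maps)
    is Kantorovich if it equals F^{Λ'} for some class Λ'. *)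
Definition is_Kantorovich (V : Quantale) (F : SetFunctor)
  (c : forall X : VCat V, F X -> F X -> V) : Prop :=
  exists P : PredLiftingClass V F,
    forall (X : VCat V) (s t : F X), c X s t = @kant_hom V F P X s t.

(* Each A_λ, being injective w.r.t. initial morphisms, is a retract of V^{|A_λ|} via a retraction r_λ of
   the (initial) Yoneda embedding y : A_λ -> V^{|A_λ|}.  For every element b of B_λ, the map
   g ↦ B_λ(b, λ(r_λ ∘ g)(-)) is then a |A_λ|-ary V-valued predicate lifting.  The Yoneda lemma
   ⋀_b hom(B(b,u), B(b,v)) = B(u,v) turns the Kantorovich structure of these liftings into the
   topological one, since every V-functor X -> A_λ factors as r_λ ∘ y ∘ f. *)
From Stdlib Require Import ClassicalEpsilon FunctionalExtensionality ProofIrrelevance.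
Set Implicit Arguments.
Unset Strict Implicit.

Section QuantaleFacts.
Variable V : Quantale.

Lemma qtens_monor (c a b : V) : qle a b -> qle (qtens c a) (qtens c b).
Proof.
  intros Hab.
  assert (Eb : b = qsup (fun x => x = a \/ x = b)).
  { apply qle_antisym.
    - apply qsup_ub. now right.
    - apply qsup_least. intros u [-> | ->]; auto using qle_refl. }
  rewrite Eb, qtens_sup. apply qsup_ub. exists a. split; auto.
Qed.

Lemma qtens1r (u : V) : qtens u qk = u.
Proof. rewrite qtensC. apply qtens1. Qed.

Lemma qhom_counit (u w : V) : qle (qtens u (qhom u w)) w.
Proof. apply (proj2 (qhom_adj _ _ _)). apply qle_refl. Qed.

Lemma qinf_fam_lb (I : Type) (f : I -> V) (i : I) : qle (qinf_fam f) (f i).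
Proof. apply qsup_least. intros u Hu. apply Hu. now exists i. Qed.

Lemma qinf_fam_glb (I : Type) (f : I -> V) (w : V) :
  (forall i, qle w (f i)) -> qle w (qinf_fam f).
Proof. intros Hw. apply qsup_ub. intros s [i ->]. apply Hw. Qed.

Lemma Vpow_hom_refl (K : Type) (f : K -> V) : qle qk (Vpow_hom f f).
Proof.
  apply qinf_fam_glb. intros i. apply (proj1 (qhom_adj _ _ _)). rewrite qtens1r. apply qle_refl.
Qed.

Lemma Vpow_hom_trans (K : Type) (f g h : K -> V) :
  qle (qtens (Vpow_hom f g) (Vpow_hom g h)) (Vpow_hom f h).
Proof.
  apply qinf_fam_glb. intros i. apply (proj1 (qhom_adj _ _ _)). rewrite qtensA.
  assert (Hg : qle (qtens (f i) (Vpow_hom f g)) (g i)).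
  { eapply qle_trans; [apply qtens_monor, (qinf_fam_lb _ i) | apply qhom_counit]. }
  rewrite qtensC. eapply qle_trans; [apply qtens_monor, Hg |].
  rewrite qtensC. eapply qle_trans; [apply qtens_monor, (qinf_fam_lb _ i) | apply qhom_counit].
Qed.

Definition Vpow_cat (K : Type) : VCat V :=
  Build_VCat (@Vpow_hom_refl K) (@Vpow_hom_trans K).

Lemma Vpow_hom_yoneda (C : VCat V) (u v : C) :
  Vpow_hom (fun z => vhom C z u) (fun z => vhom C z v) = vhom C u v.
Proof.
  apply qle_antisym.
  - eapply qle_trans; [apply (qinf_fam_lb _ u) |].
    eapply qle_trans; [| apply (qhom_counit (vhom C u u))].
    rewrite <- (qtens1 (qhom _ _)) at 1.
    rewrite (qtensC qk), (qtensC (vhom C u u)).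
    apply qtens_monor, vcat_refl.
  - apply qinf_fam_glb. intros z. apply (proj1 (qhom_adj _ _ _)), vcat_trans.
Qed.

Lemma yoneda_vfunctor (C : VCat V) :
  is_vfunctor (X := C) (Y := Vpow_cat C) (fun x z => vhom C z x).
Proof. intros x y. simpl. rewrite Vpow_hom_yoneda. apply qle_refl. Qed.

Definition yoneda (C : VCat V) : VFun C (Vpow_cat C) := Build_VFun (@yoneda_vfunctor C).

Lemma yoneda_initial (C : VCat V) : is_initial (yoneda C).
Proof. intros x y. apply Vpow_hom_yoneda. Qed.

Definition vid (C : VCat V) : VFun C C :=
  @Build_VFun V C C (fun x => x) (fun x y => qle_refl _).

Lemma VFun_ext (X Y : VCat V) (f g : VFun X Y) : (forall x, f x = g x) -> f = g.
Proof.
  destruct f as [f fP], g as [g gP]. simpl. intros Efg.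
  assert (f = g) as <- by (apply functional_extensionality; exact Efg).
  f_equal. apply proof_irrelevance.
Qed.

Lemma inj_initial_yoneda_retraction (A : VCat V) :
  inj_initial A -> {r : VFun (Vpow_cat A) A | forall x, r (yoneda A x) = x}.
Proof.
  intros HA. apply constructive_indefinite_description.
  exact (HA _ _ (yoneda A) (@yoneda_initial A) (vid A)).
Qed.

Definition Vpow_initial_cat (K X : Type) (g : X -> (K -> V)) : VCat V :=
  @Build_VCat V X (fun x y => Vpow_hom (g x) (g y))
    (fun x => Vpow_hom_refl (g x)) (fun x y z => Vpow_hom_trans (g x) (g y) (g z)).

Definition Vpow_initial_fun (K X : Type) (g : X -> (K -> V)) :
  VFun (Vpow_initial_cat g) (Vpow_cat K) :=
  @Build_VFun V (Vpow_initial_cat g) (Vpow_cat K) g (fun x y => qle_refl _).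

End QuantaleFacts.

Section KantorovichPresentation.
Variables (V : Quantale) (F : SetFunctor) (L : LiftingClass V F).
Variable r : forall l, VFun (Vpow_cat V (lc_A L l)) (lc_A L l).
Hypothesis r_yoneda : forall l x, r l (yoneda (lc_A L l) x) = x.

Definition yoneda_lift_idx : Type := {l : lc_idx L & lc_B L l}.

Definition yoneda_lift (j : yoneda_lift_idx) (X : Type)
  (g : X -> (lc_A L (projT1 j) -> V)) (t : F X) : V :=
  vhom (lc_B L (projT1 j)) (projT2 j)
    (lc_nat L (projT1 j) (vfcomp (r (projT1 j)) (Vpow_initial_fun g)) t).
Arguments yoneda_lift j {X} g t.

Lemma yoneda_lift_natural (j : yoneda_lift_idx) (X Y : Type) (h : X -> Y)
  (g : Y -> (lc_A L (projT1 j) -> V)) (t : F X) :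
  yoneda_lift j (fun x => g (h x)) t = yoneda_lift j g (Fmap h t).
Proof.
  unfold yoneda_lift.
  pose (hV := @Build_VFun V (Vpow_initial_cat (fun x => g (h x))) (Vpow_initial_cat g) h
                (fun x y => qle_refl _)).
  rewrite <- (@lc_natural _ _ L (projT1 j) _ _ hV). do 3 f_equal. now apply VFun_ext.
Qed.

Definition yoneda_lift_class : PredLiftingClass V F :=
  @Build_PLC V F yoneda_lift_idx (fun j => vob (lc_A L (projT1 j)))
    (@yoneda_lift) yoneda_lift_natural.

Lemma yoneda_lift_vfunctor (X : VCat V) (l : lc_idx L) (b : lc_B L l)
  (f : VFun X (Vpow_cat V (lc_A L l))) (u : F X) :
  yoneda_lift (existT _ l b) (X := X) f u = vhom (lc_B L l) b (lc_nat L l (vfcomp (r l) f) u).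
Proof.
  unfold yoneda_lift. simpl.
  (* Naturality of λ along the identity V-functor from X to the structure induced by f. *)
  pose (idV := @Build_VFun V X (Vpow_initial_cat f) (fun x => x) (vfunP f)).
  rewrite <- (Fmap_id u) at 1.
  rewrite <- (@lc_natural _ _ L l _ _ idV). do 2 f_equal. now apply VFun_ext.
Qed.

Lemma top_hom_le_kant_hom (X : VCat V) (s t : F X) :
  qle (top_hom L s t) (kant_hom yoneda_lift_class s t).
Proof.
  apply qinf_fam_glb. intros [[l b] [f fP]]. simpl.
  pose (fV := @Build_VFun V X (Vpow_cat V _) f fP).
  rewrite !(yoneda_lift_vfunctor b fV).
  eapply qle_trans; [apply (qinf_fam_lb _ (existT _ l (vfcomp (r l) fV))) |]. simpl.
  rewrite <- Vpow_hom_yoneda. exact (qinf_fam_lb _ b).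
Qed.

Lemma kant_hom_le_top_hom (X : VCat V) (s t : F X) :
  qle (kant_hom yoneda_lift_class s t) (top_hom L s t).
Proof.
  apply qinf_fam_glb. intros [l g]. simpl.
  rewrite <- Vpow_hom_yoneda. apply qinf_fam_glb. intros b.
  pose (yg := vfcomp (yoneda (lc_A L l)) g).
  assert (Eg : vfcomp (r l) yg = g) by (apply VFun_ext; intros x; apply r_yoneda).
  eapply qle_trans;
    [apply (qinf_fam_lb _ (existT (fun j : yoneda_lift_idx =>
                                     {f : X -> (lc_A L (projT1 j) -> V) | is_vfunctor_pow f})
                              (existT _ l b) (exist _ _ (vfunP yg)))) |].
  simpl. rewrite !(yoneda_lift_vfunctor b yg), Eg. apply qle_refl.
Qed.

Lemma top_hom_yoneda_lift (X : VCat V) (s t : F X) :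
  top_hom L s t = kant_hom yoneda_lift_class s t.
Proof. apply qle_antisym; [apply top_hom_le_kant_hom | apply kant_hom_le_top_hom]. Qed.

End KantorovichPresentation.

Theorem corollary1 (V : Quantale) (F : SetFunctor) (L : LiftingClass V F) :
  nontrivial V ->
  (forall l : lc_idx L, inj_initial (lc_A L l)) ->
  is_Kantorovich (top_hom L).
Proof.
  intros _ Hinj.
  pose (r := fun l => proj1_sig (inj_initial_yoneda_retraction (Hinj l))).
  assert (r_yoneda : forall l x, r l (yoneda (lc_A L l) x) = x)
    by (intros l; exact (proj2_sig (inj_initial_yoneda_retraction (Hinj l)))).
  exists (yoneda_lift_class r).
  exact (top_hom_yoneda_lift r_yoneda).
Qed.
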